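(* Let $p$ be a prime, $s\geq 2$, and $\lambda_i\in\{0,1,\dots,p-1\}$ for $i\in\{0,\dots,s-1\}$. Then $$\tau_s\Big(\sum_{i=0}^{s-1}\lambda_ip^i\Big)=\sum_{i=0}^{s-1}\tau_s(\lambda_ip^i)\quad\text{in }\mathbb{Z}_{p^{s-1}}^p.$$
   Context: For $r\geq1$ and $u\in\mathbb{Z}_{p^r}$ with $p$-ary expansion $u=\sum_{i=0}^{r-1}u_ip^i$, $\phi_r(u)=(u_{r-1},\dots,u_{r-1})+(u_0,\dots,u_{r-2})Y_{r-1}\in\mathbb{Z}_p^{p^{r-1}}$, where $Y_1=(0\ 1\ \cdots\ p-1)$ and $Y_k$ is the $k\times p^k$ matrix with first $k-1$ rows $(Y_{k-1}\ \cdots\ Y_{k-1})$ ($p$ copies) and last row $(0,\dots,0,1,\dots,1,\dots,p-1,\dots,p-1)$ (blocks of length $p^{k-1}$); $\phi_1=\mathrm{id}$; $\Phi_r$ applies $\phi_r$ coordinatewise and concatenates. $\gamma_s$ is the coordinate permutation of $\mathbb{Z}_p^{p^{s-1}}$ given by $\gamma_s(\mathbf{x})_{j+ip+1}=\mathbf{x}_{jp^{s-2}+i+1}$ for $j\in\{0,\dots,p-1\}$, $i\in\{0,\dots,p^{s-2}-1\}$. The map $\tau_s:\mathbb{Z}_{p^s}\to\mathbb{Z}_{p^{s-1}}^p$ is $\tau_s(u)=\Phi_{s-1}^{-1}(\gamma_s^{-1}(\phi_s(u)))$. *)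

From HB Require Import structures.
From mathcomp Require Import all_boot all_order all_algebra.
Set Implicit Arguments. Unset Strict Implicit. Unset Printing Implicit Defensive.
Import GRing.Theory.
Local Open Scope ring_scope.

Definition vat (R : zmodType) (N : nat) (x : 'rV[R]_N) (k : nat) : R :=
  match @insub _ (fun k => k < N)%N 'I_N k with Some i => x 0 i | None => 0 end.

Definition digit (p i u : nat) : nat := ((u %/ p ^ i) %% p)%N.

(* Entries of Y_k (0-based row i, column j), following the recursive
   definition: first k-1 rows are p copies of Y_{k-1}, last row is the
   block row (0..0,1..1,...,p-1..p-1) with blocks of length p^{k-1};
   for k = 1 this gives Y_1 = (0 1 ... p-1). *)
Fixpoint Yent (p k i j : nat) : nat :=
  match k with
  | 0 => 0
  | k'.+1 => if (i < k')%N then Yent p k' i (j %% p ^ k') else (j %/ p ^ k')%N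
  end.

Definition Ymx (p k : nat) : 'M['Z_p]_(k, p ^ k) :=
  \matrix_(i < k, j < p ^ k) (Yent p k i j)%:R.

Definition phi (p r : nat) (u : 'Z_(p ^ r)) : 'rV['Z_p]_(p ^ (r - 1)) :=
  const_mx (digit p (r - 1) u)%:R
  + (\row_(i < r - 1) ((digit p i u)%:R : 'Z_p)) *m Ymx p (r - 1).

(* Phi_r : Z_{p^r}^n -> Z_p^{n p^{r-1}}, coordinatewise phi_r then concatenation
   (the output length N is n * p^(r-1) in every use). *)
Definition Phi (p r n N : nat) (v : 'rV['Z_(p ^ r)]_n) : 'rV['Z_p]_N :=
  \row_(k < N) vat (phi (vat v (k %/ p ^ (r - 1))%N)) (k %% p ^ (r - 1))%N.

Definition gamma (p s : nat) (x : 'rV['Z_p]_(p ^ (s - 1))) : 'rV['Z_p]_(p ^ (s - 1)) :=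
  \row_(k < p ^ (s - 1)) vat x ((k %% p) * p ^ (s - 2) + k %/ p)%N.

Definition gamma_inv (p s : nat) (y : 'rV['Z_p]_(p ^ (s - 1))) : 'rV['Z_p]_(p ^ (s - 1)) :=
  odflt 0 [pick x | gamma x == y].

Definition tau (p s : nat) (u : 'Z_(p ^ s)) : 'rV['Z_(p ^ (s - 1))]_p :=
  odflt 0 [pick v : 'rV['Z_(p ^ (s - 1))]_p |
             Phi (p ^ (s - 1)) v == gamma_inv (phi u)].
Arguments tau p s u : clear implicits.

From HB Require Import structures.
From mathcomp Require Import all_boot all_order all_algebra.
From mathcomp Require Import zify.
Import GRing.Theory.
Local Open Scope ring_scope.

(* Coordinate b of tau_s(u) is [u %/ p + b (u %% p) p^(s-2)] in Z_(p^(s-1)).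
   Indeed phi_r(u)_t = u_(r-1) + sum_(i<r-1) u_i t_i in p-ary digits, and
   gamma_s matches entry t p + b of phi_s(u) with entry t of block b; the
   digits of the formula at b (those of u shifted down by one, with b u_0
   added to the top one) make phi_(s-1) reproduce that entry.  As phi, Phi
   and gamma_s are injective, this determines tau_s(u).  The formula only
   sees u %/ p and u %% p, and both are additive on the terms lam_i p^i
   since only lam_0 p^0 has a nonzero residue mod p. *)

Lemma vatE {R : zmodType} {N} (x : 'rV[R]_N) (i : 'I_N) : vat x i = x 0 i.
Proof. by rewrite /vat valK. Qed.

Lemma vat_ext (R : zmodType) N (x y : 'rV[R]_N) :
  (forall k, (k < N)%N -> vat x k = vat y k) -> x = y.
Proof.
move=> Exy; apply/rowP => i.
by have := Exy i (ltn_ord i); rewrite !vatE.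
Qed.

Section Digits.
Local Open Scope nat_scope.
Variable p : nat.

Lemma digit0E n : digit p 0 n = n %% p.
Proof. by rewrite /digit expn0 divn1. Qed.

Lemma digitS i n : digit p i.+1 n = digit p i (n %/ p).
Proof. by rewrite /digit expnS divnMA. Qed.

Lemma digit0n i : digit p i 0 = 0.
Proof. by rewrite /digit div0n mod0n. Qed.

Lemma digit_lt i n : 0 < p -> digit p i n < p.
Proof. by move=> p_gt0; rewrite ltn_pmod. Qed.

Lemma expn_split i m : i < m -> p ^ m = p ^ (m - i.+1) * p * p ^ i.
Proof. by move=> lt_im; rewrite -expnSr -expnD; congr expn; lia. Qed.

Lemma digit_add_mulX_lt i m a c : 0 < p -> i < m ->
  digit p i (a + c * p ^ m) = digit p i a.
Proof.
move=> p_gt0 lt_im; rewrite /digit (expn_split _ _ lt_im) !mulnA addnC.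
by rewrite divnMDl ?expn_gt0 ?p_gt0 // modnMDl.
Qed.

Lemma digit_add_mulX m a c : 0 < p ->
  digit p m (a + c * p ^ m) = (digit p m a + c) %% p.
Proof.
by move=> p_gt0; rewrite /digit addnC divnMDl ?expn_gt0 ?p_gt0 // addnC modnDml.
Qed.

Lemma digit_modX i k n : 0 < p -> i < k -> digit p i (n %% p ^ k) = digit p i n.
Proof.
move=> p_gt0 lt_ik; rewrite [in RHS](divn_eq n (p ^ k)) addnC.
by rewrite digit_add_mulX_lt.
Qed.

Lemma digit_expn i j : 1 < p -> digit p j (p ^ i) = (j == i).
Proof.
move=> p_gt1; have p_gt0 : 0 < p by apply: ltnW.
case: (ltngtP j i) => [lt_ji|lt_ij|->].
- by rewrite -[p ^ i]add0n -[p ^ i]mul1n digit_add_mulX_lt // digit0n.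
- by rewrite /digit divn_small ?mod0n // ltn_exp2l.
- by rewrite /digit divnn expn_gt0 p_gt0 modn_small.
Qed.

Lemma digit_inj r n m : 0 < p -> n < p ^ r -> m < p ^ r ->
  (forall i, i < r -> digit p i n = digit p i m) -> n = m.
Proof.
move=> p_gt0; elim: r n m => [|r IH] n m ltn ltm Edig.
  by move: ltn ltm; rewrite expn0; lia.
rewrite (divn_eq n p) (divn_eq m p) -!digit0E Edig //; congr (_ * _ + _).
apply: IH; rewrite ?ltn_divLR -?expnSr // => i lt_ir.
by rewrite -!digitS Edig.
Qed.

Lemma sum_digit_expn L n i : 1 < p -> i < L ->
  \sum_(j < L) digit p j n * digit p j (p ^ i) = digit p i n.
Proof.
move=> p_gt1 lt_iL; rewrite (bigD1 (Ordinal lt_iL)) //= big1 => [|j ne_ji].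
  by rewrite digit_expn // eqxx muln1 addn0.
by move: ne_ji; rewrite -val_eqE digit_expn // => /negbTE ->; rewrite muln0.
Qed.

End Digits.

Section SumDivision.
Local Open Scope nat_scope.
Variables (I : Type) (r : seq I) (F : I -> nat) (d : nat).
Hypothesis small_residues : \sum_(i <- r) F i %% d < d.

Lemma sum_divn_eq :
  \sum_(i <- r) F i = (\sum_(i <- r) F i %/ d) * d + \sum_(i <- r) F i %% d.
Proof. by rewrite big_distrl -big_split; apply: eq_bigr => i _; apply: divn_eq. Qed.

Lemma divn_sum : (\sum_(i <- r) F i) %/ d = \sum_(i <- r) F i %/ d.
Proof.
have d_gt0 : 0 < d by apply: leq_ltn_trans small_residues.
by rewrite sum_divn_eq divnMDl // divn_small ?addn0.
Qed.

Lemma modn_sum : (\sum_(i <- r) F i) %% d = \sum_(i <- r) F i %% d.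
Proof. by rewrite sum_divn_eq modnMDl modn_small. Qed.

End SumDivision.

Lemma sum_mulX_modn p s (a : 'I_s.+1 -> nat) :
  (\sum_(i < s.+1) (a i * p ^ i) %% p = a ord0 %% p)%N.
Proof.
rewrite big_ord_recl expn0 muln1 big1 ?addn0 // => i _.
by rewrite expnS mulnCA modnMr.
Qed.

Lemma natZp_inj p a b : (1 < p)%N -> (a < p)%N -> (b < p)%N ->
  (a%:R : 'Z_p) = b%:R -> a = b.
Proof. by move=> p_gt1 ltap ltbp /(congr1 val); rewrite /= !val_Zp_nat // !modn_small. Qed.

Lemma digit_Zp_nat p r i m : (1 < p)%N -> (i < r)%N ->
  digit p i (m%:R : 'Z_(p ^ r)) = digit p i m.
Proof.
move=> p_gt1 lt_ir; have p_gt0 : (0 < p)%N by apply: ltnW.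
have pr_gt1 : (1 < p ^ r)%N by rewrite -(expn0 p) ltn_exp2l // (leq_ltn_trans _ lt_ir).
by rewrite val_Zp_nat // digit_modX.
Qed.

Lemma Yent_digit p k i j : (0 < p)%N -> (i < k)%N -> (j < p ^ k)%N ->
  Yent p k i j = digit p i j.
Proof.
move=> p_gt0; elim: k i j => [//|k IH] i j lt_iSk ltj /=.
case: ifP => [lt_ik | /negbT]; first by rewrite IH ?ltn_pmod ?expn_gt0 ?p_gt0 // digit_modX.
rewrite -leqNgt => le_ki; have -> : i = k by lia.
by rewrite /digit modn_small // ltn_divLR ?expn_gt0 ?p_gt0 // -expnS.
Qed.

Lemma phi_vat {p r} (u : 'Z_(p ^ r)) t : (0 < p)%N -> (t < p ^ (r - 1))%N ->
  vat (phi u) t =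
  (digit p (r - 1) u + \sum_(i < r - 1) digit p i u * digit p i t)%N%:R.
Proof.
move=> p_gt0 ltt; rewrite (vatE (phi u) (Ordinal ltt)) /phi !mxE natrD natr_sum.
by congr (_ + _); apply: eq_bigr => i _; rewrite !mxE natrM Yent_digit.
Qed.

Lemma Phi_vat {p r n N} (v : 'rV['Z_(p ^ r)]_n) b t : (t < p ^ (r - 1))%N ->
  (b * p ^ (r - 1) + t < N)%N ->
  vat (Phi N v) (b * p ^ (r - 1) + t) = vat (phi (vat v b)) t.
Proof.
move=> ltt ltN; have P_gt0 : (0 < p ^ (r - 1))%N by apply: leq_ltn_trans ltt.
rewrite (vatE (Phi N v) (Ordinal ltN)) mxE /=.
by rewrite divnMDl // divn_small // addn0 modnMDl modn_small.
Qed.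

Lemma gamma_vat {p s} (x : 'rV['Z_p]_(p ^ (s - 1))) k : (k < p ^ (s - 1))%N ->
  vat (gamma x) k = vat x ((k %% p) * p ^ (s - 2) + k %/ p).
Proof. by move=> ltk; rewrite (vatE (gamma x) (Ordinal ltk)) mxE. Qed.

Section Injectivity.
Variable p : nat.
Hypothesis p_gt1 : (1 < p)%N.

Let p_gt0 : (0 < p)%N. Proof. exact: ltnW. Qed.

Lemma phi_inj r : (0 < r)%N -> injective (@phi p r).
Proof.
move=> r_gt0 u u' Ephi; have pr_gt1 : (1 < p ^ r)%N by rewrite -(expn0 p) ltn_exp2l.
have phi_at t := congr1 (fun x => vat x t) Ephi; rewrite /= in phi_at.
have top : digit p (r - 1) u = digit p (r - 1) u'.
  move: (phi_at 0%N); rewrite !phi_vat ?expn_gt0 ?p_gt0 //.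
  rewrite !big1 => [|i _|i _]; rewrite ?digit0n ?muln0 // !addn0.
  by apply: natZp_inj; rewrite ?digit_lt.
have val_lt (w : 'Z_(p ^ r)) : (w < p ^ r)%N by rewrite -[X in (_ < X)%N]Zp_cast.
apply/val_inj/(@digit_inj p r); rewrite ?val_lt // => i lt_ir.
have [lt_i_top|ge_i_top] := ltnP i (r - 1); last by have -> : i = (r - 1)%N by lia.
move: (phi_at (p ^ i)%N); rewrite !phi_vat ?ltn_exp2l // !sum_digit_expn //.
by rewrite !natrD top => /addrI; apply: natZp_inj; rewrite ?digit_lt.
Qed.

Lemma Phi_inj r n N : (0 < r)%N -> N = (n * p ^ (r - 1))%N ->
  injective (@Phi p r n N).
Proof.
move=> r_gt0 -> v v' EPhi; apply: vat_ext => b ltb; apply: phi_inj => //.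
apply: vat_ext => t ltt; have ltN : (b * p ^ (r - 1) + t < n * p ^ (r - 1))%N by nia.
by rewrite -(Phi_vat v _ _ ltt ltN) -(Phi_vat v' _ _ ltt ltN) EPhi.
Qed.

Lemma gamma_inj s : (2 <= s)%N -> injective (@gamma p s).
Proof.
move=> s_ge2 x y Egamma; apply: vat_ext => m ltm.
have eP : (p ^ (s - 1) = p ^ (s - 2) * p)%N by rewrite -expnSr; congr expn; lia.
have P_gt0 : (0 < p ^ (s - 2))%N by rewrite expn_gt0 p_gt0.
set k := ((m %% p ^ (s - 2)) * p + m %/ p ^ (s - 2))%N.
have ltq : (m %/ p ^ (s - 2) < p)%N by rewrite ltn_divLR // mulnC -eP.
have ltr : (m %% p ^ (s - 2) < p ^ (s - 2))%N by rewrite ltn_pmod.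
have ltk : (k < p ^ (s - 1))%N by rewrite eP /k; nia.
have Em : m = ((k %% p) * p ^ (s - 2) + k %/ p)%N.
  have -> : (k %% p = m %/ p ^ (s - 2))%N by rewrite modnMDl modn_small.
  have -> : (k %/ p = m %% p ^ (s - 2))%N by rewrite divnMDl // divn_small ?addn0.
  exact: divn_eq.
by rewrite Em -!gamma_vat // Egamma.
Qed.

Lemma gamma_invE s (x : 'rV['Z_p]_(p ^ (s - 1))) : (2 <= s)%N ->
  gamma_inv (gamma x) = x.
Proof.
move=> s_ge2; rewrite /gamma_inv; case: pickP => [z /eqP /gamma_inj -> //|].
by move/(_ x); rewrite eqxx.
Qed.

Lemma tau_unique s (u : 'Z_(p ^ s)) (v : 'rV['Z_(p ^ (s - 1))]_p) : (2 <= s)%N ->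
  gamma (Phi (p ^ (s - 1)) v) = phi u -> tau p s u = v.
Proof.
move=> s_ge2 Ev; rewrite /tau -Ev gamma_invE //.
case: pickP => [w /eqP | /(_ v)]; last by rewrite eqxx.
apply: Phi_inj; first by lia.
by rewrite -expnS; congr expn; lia.
Qed.

End Injectivity.

Lemma phi_digits_shift p n m k : (1 < p)%N ->
  ((digit p n (m %/ p + k %% p * (m %% p) * p ^ n)
    + \sum_(i < n) digit p i (m %/ p + k %% p * (m %% p) * p ^ n) * digit p i (k %/ p))%N%:R
   : 'Z_p)
  = (digit p n.+1 m + \sum_(i < n.+1) digit p i m * digit p i k)%N%:R.
Proof.
move=> p_gt1; have p_gt0 : (0 < p)%N by apply: ltnW.
rewrite digit_add_mulX // -digitS natrD Zp_nat_mod // -natrD.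
rewrite big_ord_recl !digit0E -addnA [(_ * (m %% p))%N]mulnC; congr (_ + (_ + _))%N%:R.
by apply: eq_bigr => i _; rewrite digit_add_mulX_lt // -!digitS.
Qed.

Definition tau_formula (p s n : nat) : 'rV['Z_(p ^ (s - 1))]_p :=
  \row_(b < p) (n %/ p + b * (n %% p) * p ^ (s - 2))%N%:R.

Lemma gamma_Phi_tau_formula p s m : (1 < p)%N -> (2 <= s)%N ->
  gamma (Phi (p ^ (s - 1)) (tau_formula p s m)) = phi (m%:R : 'Z_(p ^ s)).
Proof.
move=> p_gt1 s_ge2; have p_gt0 : (0 < p)%N by apply: ltnW.
have Es2 : (s - 1 - 1 = s - 2)%N by rewrite -subnDA.
have eP : (p ^ (s - 1) = p ^ (s - 1 - 1) * p)%N by rewrite -expnSr; congr expn; lia.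
apply: vat_ext => k ltk; set b := (k %% p)%N; set t := (k %/ p)%N.
have ltb : (b < p)%N by rewrite ltn_pmod.
have ltt : (t < p ^ (s - 1 - 1))%N by rewrite ltn_divLR // -eP.
have ltN : (b * p ^ (s - 1 - 1) + t < p ^ (s - 1))%N by rewrite eP; nia.
have lt_s2 : (s - 1 - 1 < s - 1)%N by lia.
have lt_s1 : (s - 1 < s)%N by lia.
rewrite gamma_vat // -Es2 (Phi_vat _ _ _ ltt ltN) (vatE _ (Ordinal ltb)) mxE.
rewrite !phi_vat // -Es2 !digit_Zp_nat //.
under eq_bigr => i _ do rewrite (@digit_Zp_nat _ _ _ _ p_gt1 (ltn_trans (ltn_ord i) lt_s2)).
under [in RHS]eq_bigr => i _ do rewrite (@digit_Zp_nat _ _ _ _ p_gt1 (ltn_trans (ltn_ord i) lt_s1)).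
have Es1 : (s - 1 = (s - 1 - 1).+1)%N by lia.
by rewrite [in RHS]Es1 -phi_digits_shift.
Qed.

Lemma tau_natE p s m : (1 < p)%N -> (2 <= s)%N ->
  tau p s m%:R = tau_formula p s m.
Proof. by move=> p_gt1 s_ge2; apply: tau_unique => //; apply: gamma_Phi_tau_formula. Qed.

Theorem corollary1 (p s : nat) (lam : 'I_s -> 'I_p) :
  prime p -> (2 <= s)%N ->
  tau p s ((\sum_(i < s) lam i * p ^ i)%N%:R)
  = \sum_(i < s) tau p s ((lam i * p ^ i)%N%:R).
Proof.
move=> /prime_gt1 p_gt1 s_ge2; rewrite tau_natE //.
under [RHS]eq_bigr => i _ do rewrite tau_natE //.
have small_residues : (\sum_(i < s) (lam i * p ^ i) %% p < p)%N.
  by case: s lam s_ge2 => // s lam _; rewrite sum_mulX_modn ltn_pmod // ltnW.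
apply/rowP => b; rewrite summxE mxE; under [RHS]eq_bigr do rewrite mxE.
rewrite -natr_sum big_split /= -big_distrl -big_distrr /=.
by rewrite divn_sum // modn_sum.
Qed.
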